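(* Let $\{W_i\}_{i=1}^M$ be subspaces of $\mathbb{R}^N$ which do phase retrieval, and assume $\sum_{i=1}^M\dim(W_i)=2N-1$. Then $W_i\cap W_j=\{0\}$ for all $i\neq j$.
   Context: A family of subspaces $\{W_i\}_{i=1}^M$ of $\mathbb{R}^N$ with orthogonal projections $\{P_i\}_{i=1}^M$ does phase retrieval if for all $x,y\in\mathbb{R}^N$, $\|P_ix\|=\|P_iy\|$ for all $i$ implies $x=\pm y$. *)

(* R^N is modelled as row vectors 'rV[R]_N over R : realType;
   a subspace W of R^N is the row space of a square matrix W : 'M[R]_N. *)
From HB Require Import structures.
From mathcomp Require Import all_boot all_order all_algebra.
From mathcomp Require Import boolp reals.
Set Implicit Arguments. Unset Strict Implicit. Unset Printing Implicit Defensive.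
Import Order.TTheory GRing.Theory Num.Theory.
Local Open Scope ring_scope.

Definition dotv (R : realType) (N : nat) (u v : 'rV[R]_N) : R :=
  \sum_(j < N) u 0 j * v 0 j.
Definition enorm (R : realType) (N : nat) (u : 'rV[R]_N) : R :=
  Num.sqrt (dotv u u).

Definition is_orth_proj (R : realType) (N : nat) (W : 'M[R]_N) (x p : 'rV[R]_N) : Prop :=
  (p <= W)%MS /\ forall w : 'rV[R]_N, (w <= W)%MS -> dotv (x - p) w = 0.

(* The orthogonal projection onto W (exists uniquely in finite dimension),
   chosen via the library's classical choice. *)
Definition orth_proj (R : realType) (N : nat) (W : 'M[R]_N) (x : 'rV[R]_N) : 'rV[R]_N :=
  match pselect (exists p, is_orth_proj W x p) with
  | left H => projT1 (cid H)
  | right _ => 0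
  end.

Definition phase_retrieval (R : realType) (N M : nat) (W : 'I_M -> 'M[R]_N) : Prop :=
  forall x y : 'rV[R]_N,
    (forall i, enorm (orth_proj (W i) x) = enorm (orth_proj (W i) y)) ->
    x = y \/ x = - y.

(* If a nonzero w lies in W_i ∩ W_j, choose subspaces A_t ⊆ W_t with
   w ∈ A_i ∩ A_j and Σ dim A_t = N.  As w is counted twice, the A_t span a
   proper subspace; the B_t := W_t ∩ A_t^⊥ have Σ dim B_t ≤ (2N - 1) - N < N,
   so they span a proper subspace too.  Take nonzero u ⊥ Σ A_t and v ⊥ Σ B_t.
   Then P_t u ∈ B_t is orthogonal to v, so ‖P_t (u + v)‖ = ‖P_t (u - v)‖ for
   every t, although u + v ≠ ±(u - v). *)
From HB Require Import structures.
From mathcomp Require Import all_boot all_order all_algebra.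
From mathcomp Require Import boolp reals.
From mathcomp Require Import zify.
Import Order.TTheory GRing.Theory Num.Theory.
Set Implicit Arguments. Unset Strict Implicit. Unset Printing Implicit Defensive.
Local Open Scope ring_scope.

Section Orthogonality.
Variables (R : realType) (n : nat).
Implicit Types (u v w x : 'rV[R]_n).

Lemma dotv_mxE u v : dotv u v = (u *m v^T) 0 0.
Proof. by rewrite /dotv mxE; apply: eq_bigr => k _; rewrite mxE. Qed.

Lemma dotvC u v : dotv u v = dotv v u.
Proof. by apply: eq_bigr => k _; rewrite mulrC. Qed.

Lemma dotvDl u v w : dotv (u + v) w = dotv u w + dotv v w.
Proof. by rewrite /dotv -big_split; apply: eq_bigr => k _; rewrite mxE mulrDl. Qed.

Lemma dotvNl u w : dotv (- u) w = - dotv u w.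
Proof. by rewrite /dotv -sumrN; apply: eq_bigr => k _; rewrite mxE mulNr. Qed.

Lemma dotvDr u v w : dotv u (v + w) = dotv u v + dotv u w.
Proof. by rewrite dotvC dotvDl !(dotvC u). Qed.

Lemma dotvNr u w : dotv u (- w) = - dotv u w.
Proof. by rewrite dotvC dotvNl dotvC. Qed.

Lemma dotvBl u v w : dotv (u - v) w = dotv u w - dotv v w.
Proof. by rewrite dotvDl dotvNl. Qed.

Lemma dotvv_eq0 u : dotv u u = 0 -> u = 0.
Proof.
move=> /eqP; rewrite psumr_eq0 => [/allP u0|k _]; last by rewrite -expr2 sqr_ge0.
apply/rowP => k; have /implyP/(_ isT) := u0 k (mem_index_enum k).
by rewrite mulf_eq0 orbb mxE => /eqP.
Qed.

Definition orthmx m (A : 'M[R]_(m, n)) : 'M[R]_n := kermx A^T.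

Lemma sub_orthmxP m (A : 'M[R]_(m, n)) u :
  (u <= orthmx A)%MS <-> forall a, (a <= A)%MS -> dotv u a = 0.
Proof.
rewrite sub_kermx; split=> [/eqP uA a /submxP [c ->] | uA].
  by rewrite dotv_mxE trmx_mul mulmxA uA mul0mx mxE.
apply/eqP/rowP => j; rewrite [RHS]mxE -(uA _ (row_sub j A)) dotv_mxE !mxE.
by apply: eq_bigr => k _; rewrite !mxE.
Qed.

Lemma orthmxS m p (A : 'M[R]_(m, n)) (B : 'M[R]_(p, n)) :
  (A <= B)%MS -> (orthmx B <= orthmx A)%MS.
Proof.
move=> sAB; apply/row_subP => k; apply/sub_orthmxP => a aA.
by apply: (sub_orthmxP _ _).1 (row_sub k _) _ (submx_trans aA sAB).
Qed.

Lemma capmx_orthmx m (A : 'M[R]_(m, n)) : (A :&: orthmx A)%MS = 0.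
Proof.
apply/eqP/rowV0P => z; rewrite sub_capmx => /andP [zA /sub_orthmxP zAperp].
exact: dotvv_eq0 (zAperp z zA).
Qed.

Lemma mxrank_orthmx m (A : 'M[R]_(m, n)) : \rank (orthmx A) = (n - \rank A)%N.
Proof. by rewrite mxrank_ker mxrank_tr. Qed.

Lemma orthmx_neq0 m (A : 'M[R]_(m, n)) :
  (\rank A < n)%N -> exists2 u : 'rV_n, (u <= orthmx A)%MS & u != 0.
Proof.
by move=> ltAn; apply/rowV0Pn; rewrite -mxrank_eq0 mxrank_orthmx subn_eq0 -ltnNge.
Qed.

Lemma mxrank_cap_orthmx m p (A : 'M[R]_(m, n)) (W : 'M[R]_(p, n)) :
  (A <= W)%MS -> (\rank (W :&: orthmx A) + \rank A <= \rank W)%N.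
Proof.
move=> sAW; rewrite addnC -mxrank_disjoint_sum; last first.
  by apply/eqP; rewrite -submx0 -(capmx_orthmx A) capmxS ?capmxSr.
by apply: mxrankS; rewrite addsmx_sub sAW capmxSl.
Qed.

Lemma mxrank_sum_cap_orthmx (I : finType) (A W : I -> 'M[R]_n) :
  (forall t, A t <= W t)%MS ->
  (\rank (\sum_t (W t :&: orthmx (A t)))%MS + \sum_t \rank (A t)
     <= \sum_t \rank (W t))%N.
Proof.
move=> sAW; apply: leq_trans (leq_add (mxrank_sum_leqif _).1 (leqnn _)) _.
by rewrite -big_split; apply: leq_sum => t _; apply: mxrank_cap_orthmx.
Qed.

End Orthogonality.

Section OrthogonalProjection.
Variables (R : realType) (n : nat) (W : 'M[R]_n).
Implicit Types (u v w x : 'rV[R]_n).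

Lemma orth_proj_exists x : exists p, is_orth_proj W x p.
Proof.
have fullW : row_full (W + orthmx W)%MS.
  rewrite /row_full mxrank_disjoint_sum ?capmx_orthmx //.
  by rewrite mxrank_orthmx subnKC ?rank_leq_col.
have /sub_addsmxP [[c d] /= ->] := submx_full x fullW.
exists (c *m W); split; first exact: submxMl.
by apply/sub_orthmxP; rewrite addrC addKr submxMl.
Qed.

Lemma orth_projP x : is_orth_proj W x (orth_proj W x).
Proof.
rewrite /orth_proj; case: pselect => [ex | /(_ (orth_proj_exists x))] //.
exact: projT2 (cid ex).
Qed.

Lemma orth_proj_sub x : (orth_proj W x <= W)%MS.
Proof. by case: (orth_projP x). Qed.

Lemma dotv_orth_proj x w : (w <= W)%MS -> dotv (orth_proj W x) w = dotv x w.
Proof. by case: (orth_projP x) => _ /[apply]; rewrite dotvBl => /subr0_eq. Qed.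

Lemma orth_proj_uniq x p : is_orth_proj W x p -> orth_proj W x = p.
Proof.
move=> [pW xp]; apply/subr0_eq/dotvv_eq0.
have dW : (orth_proj W x - p <= W)%MS by rewrite addmx_sub ?eqmx_opp ?orth_proj_sub.
by rewrite dotvBl dotv_orth_proj // -dotvBl xp.
Qed.

Lemma orth_projD x y : orth_proj W (x + y) = orth_proj W x + orth_proj W y.
Proof.
apply: orth_proj_uniq; split; first by rewrite addmx_sub ?orth_proj_sub.
move=> w wW; rewrite opprD addrACA dotvDl !dotvBl !dotv_orth_proj //.
by rewrite !subrr addr0.
Qed.

Lemma orth_projN x : orth_proj W (- x) = - orth_proj W x.
Proof.
apply: orth_proj_uniq; split; first by rewrite eqmx_opp orth_proj_sub.
by move=> w wW; rewrite -opprD dotvNl dotvBl dotv_orth_proj // subrr oppr0.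
Qed.

Lemma orth_proj_orthmx m (A : 'M[R]_(m, n)) u :
  (A <= W)%MS -> (u <= orthmx A)%MS -> (orth_proj W u <= W :&: orthmx A)%MS.
Proof.
move=> sAW /sub_orthmxP uA; rewrite sub_capmx orth_proj_sub; apply/sub_orthmxP => a aA.
by rewrite dotv_orth_proj ?uA // (submx_trans aA).
Qed.

Lemma enorm_orth_projDB u v :
  dotv (orth_proj W u) v = 0 ->
  enorm (orth_proj W (u + v)) = enorm (orth_proj W (u - v)).
Proof.
move=> uv; rewrite !orth_projD orth_projN /enorm.
set p := orth_proj W u; set q := orth_proj W v.
have pq : dotv p q = 0 by rewrite dotvC dotv_orth_proj ?orth_proj_sub // dotvC.
have qp : dotv q p = 0 by rewrite dotvC.
by rewrite !(dotvDl, dotvDr, dotvNl, dotvNr) pq qp !(oppr0, addr0, add0r, opprK).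
Qed.

End OrthogonalProjection.

Lemma exists_sum_between (I : finType) (l r : I -> nat) (K : nat) :
  (forall i, l i <= r i)%N -> (\sum_i l i <= K <= \sum_i r i)%N ->
  exists2 k : I -> nat, (forall i, l i <= k i <= r i)%N & (\sum_i k i)%N = K.
Proof.
move=> lr /andP [lK Kr]; have [d] := ubnP (K - \sum_i l i)%N.
elim: d l lr lK => // d IHd l lr lK ltd.
have [eqK | ltK] := eqVneq (\sum_i l i)%N K.
  by exists l => // i; rewrite leqnn lr.
have [i0 li0] : exists i0, (l i0 < r i0)%N.
  case: (pickP (fun i => l i < r i)%N) => [i0 li0 | ler]; first by exists i0.
  have : (\sum_i r i <= \sum_i l i)%N by apply: leq_sum => i _; rewrite leqNgt ler.
  lia.
pose l' i := (l i + (i == i0))%N.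
have suml' : (\sum_i l' i = (\sum_i l i).+1)%N.
  rewrite big_split /= -[RHS]addn1; congr (_ + _)%N.
  by rewrite (bigD1 i0) //= eqxx big1 // => i /negbTE ->.
have l'r i : (l' i <= r i)%N by rewrite /l'; case: eqP => [->|]; rewrite ?addn1 ?addn0.
suff [k lk sk] : exists2 k : I -> nat,
    (forall i, l' i <= k i <= r i)%N & (\sum_i k i)%N = K.
  by exists k => // i; have := lk i; rewrite /l'; lia.
by apply: IHd => //; rewrite suml'; lia.
Qed.

Section Rank.
Variables (R : fieldType) (n : nat).

Lemma exists_submx_between m p (U : 'M[R]_(m, n)) (W : 'M[R]_(p, n)) k :
  (U <= W)%MS -> (\rank U <= k <= \rank W)%N ->
  exists A : 'M[R]_n, [/\ (U <= A)%MS, (A <= W)%MS & \rank A = k].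
Proof.
move=> sUW /andP [Uk kW]; set D := (W :\: U)%MS.
have rD : \rank D = (\rank W - \rank U)%N.
  by rewrite -(mxrank_cap_compl W U) (capmx_idPr sUW) addKn.
pose E : 'M[R]_n := pid_mx (k - \rank U) *m row_base D.
have rE : \rank E = (k - \rank U)%N.
  have Wn := rank_leq_col W.
  by rewrite mxrankMfree ?row_base_free // rank_pid_mx // ?rD; lia.
have sED : (E <= D)%MS by rewrite (submx_trans (submxMl _ _)) ?eq_row_base.
have UE0 : (U :&: E)%MS = 0.
  by apply/eqP; rewrite -submx0 -(capmx_diff W U) capmxC capmxS.
exists (U + E)%MS; split; first exact: addsmxSl.
  by rewrite addsmx_sub sUW (submx_trans sED) ?diffmxSl.
by rewrite mxrank_disjoint_sum // rE subnKC.
Qed.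

Lemma exists_submx_family_rank (I : finType) m p
    (U : I -> 'M[R]_(m, n)) (W : I -> 'M[R]_(p, n)) (K : nat) :
  (forall t, U t <= W t)%MS ->
  (\sum_t \rank (U t) <= K <= \sum_t \rank (W t))%N ->
  exists A : I -> 'M[R]_n,
    [/\ forall t, (U t <= A t)%MS, forall t, (A t <= W t)%MS
      & (\sum_t \rank (A t))%N = K].
Proof.
move=> sUW /(exists_sum_between (fun t => mxrankS (sUW t))) [k Uk sumk].
have /choice [A At] : forall t, exists A : 'M[R]_n,
    [/\ (U t <= A)%MS, (A <= W t)%MS & \rank A = k t].
  by move=> t; apply: exists_submx_between.
exists A; split=> [t | t |]; try by case: (At t).
by rewrite -sumk; apply: eq_bigr => t _; case: (At t).
Qed.

Lemma mxrank_sumsmx_lt (I : finType) (A : I -> 'M[R]_n) i j (w : 'rV[R]_n) :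
  i != j -> w != 0 -> (w <= A i)%MS -> (w <= A j)%MS ->
  (\rank (\sum_t A t)%MS < \sum_t \rank (A t))%N.
Proof.
move=> ij w0 wAi wAj; rewrite (ltn_leqif (mxrank_sum_leqif _)).
apply: contra w0 => /mxdirect_sumsP /(_ i isT) Ai0.
rewrite -submx0 -Ai0 sub_capmx wAi (sumsmx_sup j) //.
by rewrite eq_sym.
Qed.

End Rank.

Lemma phase_retrieval_orth (R : realType) (N M : nat) (W : 'I_M -> 'M[R]_N)
    (u v : 'rV[R]_N) :
  phase_retrieval W -> (forall t, dotv (orth_proj (W t) u) v = 0) ->
  u = 0 \/ v = 0.
Proof.
move=> PR uv; have opp_fixed0 (x : 'rV[R]_N) : x = - x -> x = 0.
  move/eqP; rewrite -subr_eq0 opprK -mulr2n -scaler_nat scaler_eq0 pnatr_eq0.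
  by move/eqP.
have [/addrI|] := PR (u + v) (u - v) (fun t => enorm_orth_projDB (uv t)).
  by right; apply: opp_fixed0.
by rewrite opprB addrC => /addrI; left; apply: opp_fixed0.
Qed.

Lemma phase_retrieval_span (R : realType) (N M : nat) (W A : 'I_M -> 'M[R]_N) :
  phase_retrieval W -> (forall t, A t <= W t)%MS ->
  (\rank (\sum_t A t)%MS < N)%N ->
  (N <= \rank (\sum_t (W t :&: orthmx (A t)))%MS)%N.
Proof.
move=> PR sAW ltA; rewrite leqNgt; apply/negP => ltB.
have [u uA u0] := orthmx_neq0 ltA; have [v vB v0] := orthmx_neq0 ltB.
have uv t : dotv (orth_proj (W t) u) v = 0.
  rewrite dotvC; apply: (sub_orthmxP _ _).1 vB _ (sumsmx_sup t _ _) => //.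
  by rewrite orth_proj_orthmx // (submx_trans uA) ?orthmxS ?(sumsmx_sup t).
by case: (phase_retrieval_orth PR uv) => /eqP; apply/negP.
Qed.

Theorem mainTheorem9 (R : realType) (N M : nat) (W : 'I_M -> 'M[R]_N) :
  phase_retrieval W ->
  (\sum_(i < M) \rank (W i))%N = (2 * N - 1)%N ->
  forall i j : 'I_M, i != j -> (W i :&: W j == (0 : 'M[R]_N))%MS.
Proof.
move=> PR sumW i j ij; apply/andP; split; last exact: sub0mx.
rewrite submx0; apply: contraT => /rowV0Pn [w]; rewrite sub_capmx => /andP [wi wj] w0.
pose U t : 'rV[R]_N := if (t == i) || (t == j) then w else 0.
have sUW t : (U t <= W t)%MS by rewrite /U; case: orP => [[] /eqP -> | _]; rewrite ?sub0mx.
have sumU : (\sum_t \rank (U t))%N = 2.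
  have rw : \rank w = 1%N by apply/eqP; rewrite eqn_leq rank_leq_row lt0n mxrank_eq0.
  rewrite (bigD1 i) // (bigD1 j) 1?eq_sym //= big1 => [|t /andP [/negbTE ti /negbTE tj]].
    by rewrite /U eqxx (negbTE ij) eqxx orbT rw.
  by rewrite /U ti tj mxrank0.
have UNW : (\sum_t \rank (U t) <= N <= \sum_t \rank (W t))%N.
  have : (\sum_t \rank (U t) <= \sum_t \rank (W t))%N.
    by apply: leq_sum => t _; apply: mxrankS.
  by rewrite sumU sumW => N2; apply/andP; split; lia.
have [A [sUA sAW sumA]] := exists_submx_family_rank sUW UNW.
have ltA : (\rank (\sum_t A t)%MS < N)%N.
  rewrite -[X in (_ < X)%N]sumA (mxrank_sumsmx_lt ij w0) //.
    by apply: submx_trans (sUA i); rewrite /U eqxx.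
  by apply: submx_trans (sUA j); rewrite /U eqxx orbT.
have ltB : (\rank (\sum_t (W t :&: orthmx (A t)))%MS < N)%N.
  by have := mxrank_sum_cap_orthmx sAW; rewrite sumA sumW; lia.
by have := phase_retrieval_span PR sAW ltA; rewrite leqNgt ltB.
Qed.
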